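(* Let $\mathcal X$ be the standard Borel space of countable irreflexive graphs with vertex set $\omega$ having no isolated vertices, and $\mathcal Y$ the standard Borel space of countable pointed reflexive graphs. There is a Borel map $F\colon\mathcal X\to\mathcal Y$ such that for all $\Gamma,\Delta\in\mathcal X$: $$\Gamma\preccurlyeq_1\Delta \iff F(\Gamma)\twoheadleftarrow F(\Delta).$$ Explicitly one may take, for $\Gamma=(V,R_\Gamma)$, $F(\Gamma)$ to be the graph on $V\cup\{c\}$ ($c$ a new vertex, the distinguished vertex) with edge set $(V^2\setminus R_\Gamma)\cup(\{c\}\times V)\cup(V\times\{c\})\cup\{(c,c)\}$. Consequently (using that $\preccurlyeq_1$ on $\mathcal X$ is a complete analytic quasi-order), the relation $\twoheadleftarrow$ on countable pointed reflexive graphs is a complete analytic quasi-order.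
   Context: A graph is $(V,R)$ with $R\subseteq V^2$ symmetric and irreflexive; a reflexive graph is $(V,R)$ with $R$ symmetric and $(a,a)\in R$ for all $a\in V$. A homomorphism $f\colon(V_\Gamma,R_\Gamma)\to(V_\Delta,R_\Delta)$ is a map $V_\Gamma\to V_\Delta$ with $(a,b)\in R_\Gamma\Rightarrow (f(a),f(b))\in R_\Delta$. For graphs, $\Gamma\preccurlyeq_1\Delta$ means there is an injective homomorphism from $\Gamma$ to $\Delta$. A pointed reflexive graph $\Gamma_c$ is a (possibly empty) reflexive graph $\Gamma$ together with an extra distinguished vertex $c$ (named by a constant) adjacent to every vertex, including itself. A homomorphism of pointed reflexive graphs is a homomorphism of reflexive graphs sending distinguished vertex to distinguished vertex. For pointed reflexive graphs, $\Gamma_c\twoheadleftarrow\Delta_c$ means there is a surjective homomorphism (of pointed reflexive graphs) from $\Delta_c$ onto $\Gamma_c$. A complete analytic quasi-order on a standard Borel space $Y$ is an analytic quasi-order $Q$ such that every analytic quasi-order $P$ on a standard Borel space $X$ Borel reduces to it: there is a Borel $f\colon X\to Y$ with $xPx'\iff f(x)Qf(x')$. *)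

From mathcomp Require Import all_boot all_order.
From mathcomp Require Import boolp classical_sets measurable_structure.
Set Implicit Arguments. Unset Strict Implicit. Unset Printing Implicit Defensive.
Local Open Scope classical_set_scope.

(** Ambient Cantor space 2^(omega x omega): binary relations on omega,
    with its Borel sigma-algebra = sigma-algebra generated by the basic
    cylinders [R n m = b] (product topology of the Cantor space). *)
Definition cspace := nat -> nat -> bool.

Definition cylinders : set (set cspace) :=
  [set A | exists (n m : nat) (b : bool), A = [set R : cspace | R n m = b]].

Definition borel_set (A : set cspace) : Prop := <<s cylinders>> A.

Definition borel_map (F : cspace -> cspace) : Prop :=
  forall A, borel_set A -> borel_set (F @^-1` A).

Definition in_X (R : cspace) : Prop :=
  (forall n m, R n m = R m n) /\ (forall n, R n n = false) /\
  (forall n, exists m, R n m).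

(** S codes the reflexive
    graph Gamma on the vertex set V = {n | S n n} (a subset of omega, possibly
    finite or empty); the distinguished vertex c (= None below) is added and
    is adjacent to every vertex including itself. *)
Definition in_Y (S : cspace) : Prop :=
  (forall n m, S n m = S m n) /\ (forall n m, S n m -> S n n).

Definition pvtx (S : cspace) (v : option nat) : bool :=
  match v with None => true | Some n => S n n end.

Definition padj (S : cspace) (u v : option nat) : bool :=
  match u, v with
  | Some a, Some b => S a b
  | _, _ => true
  end.

Definition embeds1 (R R' : cspace) : Prop :=
  exists f : nat -> nat, injective f /\
    (forall a b, R a b -> R' (f a) (f b)).

(** psurj S S' : there is a surjective homomorphism of pointed reflexive
    graphs from (coded) S'_c onto S_c, i.e. S_c <<-- S'_c. *)
Definition psurj (S S' : cspace) : Prop :=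
  exists h : option nat -> option nat,
    h None = None /\
    (forall v, pvtx S' v -> pvtx S (h v)) /\
    (forall u v, pvtx S' u -> pvtx S' v -> padj S' u v -> padj S (h u) (h v)) /\
    (forall w, pvtx S w -> exists v, pvtx S' v /\ h v = w).

(** In the coding of Y the
    non-distinguished part is the relation ~~ R (its diagonal is all true
    because R is irreflexive, so the vertex set is all of omega). *)
Definition Fmap (R : cspace) : cspace := fun n m => ~~ R n m.

From mathcomp Require Import all_boot all_order.
From mathcomp Require Import boolp classical_sets measurable_structure.
Local Open Scope classical_set_scope.

(* An injective
   homomorphism f : Gamma -> Delta yields the surjection F(Delta) ->> F(Gamma)
   inverting f on its image and collapsing everything else onto c: a
   non-edge of Delta between f a and f b is a non-edge of Gamma, since f
   preserves edges.  Conversely, a section s of a pointed surjection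
   F(Delta) ->> F(Gamma) avoids c, is injective, and preserves edges, since
   a non-edge between s a and s b would be mapped to a non-edge between a
   and b. *)

Lemma borel_map_of_cylinders (F : cspace -> cspace) :
  (forall C, cylinders C -> borel_set (F @^-1` C)) -> borel_map F.
Proof.
move=> Fcyl A; apply: (smallest_sub (X := [set B | borel_set (F @^-1` B)])) => //.
split=> /=.
- by rewrite preimage_set0; exact: sigma_algebra0.
- move=> B FB; have -> : F @^-1` (setT `\` B) = setT `\` F @^-1` B.
    by apply/seteqP; split=> x /=.
  exact: sigma_algebraCD.
- by move=> G FG; rewrite preimage_bigcup; exact: sigma_algebra_bigcup.
Qed.

Lemma preimage_Fmap_cylinder (n m : nat) (b : bool) :
  Fmap @^-1` [set S : cspace | S n m = b] = [set R : cspace | R n m = ~~ b].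
Proof. by apply/seteqP; split=> R /=; rewrite /Fmap; case: (R n m); case: b. Qed.

Lemma borel_map_Fmap : borel_map Fmap.
Proof.
apply: borel_map_of_cylinders => _ [n [m [b ->]]].
by rewrite preimage_Fmap_cylinder; apply: sub_gen_smallest; exists n, m, (~~ b).
Qed.

Lemma pvtx_Fmap {R : cspace} :
  (forall n, R n n = false) -> forall v, pvtx (Fmap R) v.
Proof. by move=> R_irrefl [n|] //=; rewrite /Fmap R_irrefl. Qed.

Lemma in_Y_Fmap (R : cspace) :
  (forall n m, R n m = R m n) -> (forall n, R n n = false) -> in_Y (Fmap R).
Proof.
by move=> R_sym R_irrefl; split=> n m; rewrite /Fmap; [rewrite R_sym | rewrite R_irrefl].
Qed.

Definition opt_preimage (f : nat -> nat) (v : option nat) : option nat :=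
  if v is Some n then
    if pselect (exists a, f a = n) is left e then Some (projT1 (cid e))
    else None
  else None.

Lemma opt_preimage_Some {f : nat -> nat} {n a : nat} :
  opt_preimage f (Some n) = Some a -> f a = n.
Proof. by rewrite /=; case: pselect => // e [<-]; case: cid. Qed.

Lemma opt_preimageK (f : nat -> nat) : injective f ->
  pcancel f (opt_preimage f \o Some).
Proof.
move=> f_inj a /=; case: pselect => [e|[]]; last by exists a.
by case: cid => b /= /f_inj ->.
Qed.

Section IrreflexiveGraphs.

Variables R R' : cspace.
Hypothesis R_irrefl : forall n, R n n = false.
Hypothesis R'_irrefl : forall n, R' n n = false.

Lemma psurj_Fmap_of_embeds1 : embeds1 R R' -> psurj (Fmap R) (Fmap R').
Proof.
move=> [f [f_inj f_hom]]; exists (opt_preimage f).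
split=> //; split; first by move=> v _; exact: pvtx_Fmap.
split.
  case=> [u|] [v|] _ _ //; last by rewrite /=; case: pselect.
  case Hu: (opt_preimage f (Some u)) => [a|//].
  case Hv: (opt_preimage f (Some v)) => [b|//] /=.
  rewrite /Fmap -(opt_preimage_Some Hu) -(opt_preimage_Some Hv).
  by apply: contra; exact: f_hom.
case=> [a|] _; last by exists None.
by exists (Some (f a)); split; [exact: pvtx_Fmap | exact: opt_preimageK].
Qed.

Lemma embeds1_of_psurj_Fmap : psurj (Fmap R) (Fmap R') -> embeds1 R R'.
Proof.
move=> [h [h_c [_ [h_adj h_surj]]]].
have h_hit a : exists n, h (Some n) = Some a.
  have [[n|] [_ hv]] := h_surj (Some a) (pvtx_Fmap R_irrefl (Some a)); first by exists n.
  by rewrite h_c in hv.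
have [f f_sect] := choice h_hit.
have f_pcan : pcancel f (h \o Some) by [].
exists f; split; first exact: pcan_inj f_pcan.
move=> a b Rab; apply: contraT => nR'.
have := h_adj _ _ (pvtx_Fmap R'_irrefl (Some (f a)))
    (pvtx_Fmap R'_irrefl (Some (f b))).
by rewrite /= /Fmap nR' !f_sect /= Rab; apply.
Qed.

End IrreflexiveGraphs.

Theorem proposition3p3 :
  borel_map Fmap /\
  (forall R, in_X R -> in_Y (Fmap R)) /\
  (forall R R', in_X R -> in_X R' ->
     (embeds1 R R' <-> psurj (Fmap R) (Fmap R'))).
Proof.
split; first exact: borel_map_Fmap.
split; first by move=> R [R_sym [R_irrefl _]]; exact: in_Y_Fmap.
move=> R R' [_ [R_irrefl _]] [_ [R'_irrefl _]]; split.
- exact: psurj_Fmap_of_embeds1.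
- exact: embeds1_of_psurj_Fmap.
Qed.
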